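(* Let $\alpha\in(0,1)$, $R>0$, and let $V(\lambda)$ be the maximal Phase-II observation time when at the contact time $t_2$ the target is on the boundary of the observation disk with relative bearing $\lambda\in[-\pi,\pi]$. Then $V(\lambda)=0$ whenever $\lambda\in[\cos^{-1}(-\alpha),\pi]\cup[-\pi,-\cos^{-1}(-\alpha)]$.
   Context: Target: position $(0,y_T(t))$, $\dot y_T=1$. Observer: position $(x_O(t),y_O(t))$, $\dot x_O=\alpha\cos\psi(t)$, $\dot y_O=\alpha\sin\psi(t)$, heading $\psi$ a measurable control. Contact with bearing $\lambda$ at time $t_2$ means $\big(x_O(t_2),y_O(t_2)-y_T(t_2)\big)=R(\sin\lambda,\cos\lambda)$. For a control on $[t_2,\infty)$, $t_f=\inf\{t\ge t_2: x_O(t)^2+(y_O(t)-y_T(t))^2>R^2\}$ and the observation time is $t_f-t_2$; $V(\lambda)$ is the supremum of $t_f-t_2$ over all controls. *)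

From HB Require Import structures.
From mathcomp Require Import all_boot all_order all_algebra.
From mathcomp Require Import all_classical all_reals all_analysis.
Set Implicit Arguments. Unset Strict Implicit. Unset Printing Implicit Defensive.
Import Order.TTheory GRing.Theory Num.Theory.
Import numFieldNormedType.Exports.
Local Open Scope classical_set_scope.
Local Open Scope ring_scope.

Section Pursuit.
Variable R : realType.

(* Target position: (0, yT t), yT' = 1, with yT t2 = y2. *)
Definition yT (t2 y2 t : R) : R := y2 + (t - t2).

(* Observer position, obtained by integrating xO' = alpha cos psi,
   yO' = alpha sin psi from the contact time t2, where at t2 the relative
   position (xO, yO - yT) equals Rd (sin lam, cos lam). *)
Definition xO (alpha Rd lam t2 : R) (psi : R -> R) (t : R) : R :=
  Rd * sin lam + \int[lebesgue_measure]_(s in `[t2, t]) (alpha * cos (psi s)).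
Definition yO (alpha Rd lam t2 y2 : R) (psi : R -> R) (t : R) : R :=
  y2 + Rd * cos lam + \int[lebesgue_measure]_(s in `[t2, t]) (alpha * sin (psi s)).

Definition exit_time (alpha Rd lam t2 y2 : R) (psi : R -> R) : \bar R :=
  ereal_inf [set t%:E | t in [set t : R | t2 <= t /\
     xO alpha Rd lam t2 psi t ^+ 2 + (yO alpha Rd lam t2 y2 psi t - yT t2 y2 t) ^+ 2
       > Rd ^+ 2]].

Definition Vobs (alpha Rd lam t2 y2 : R) : \bar R :=
  ereal_sup [set (exit_time alpha Rd lam t2 y2 psi - t2%:E)%E |
     psi in [set psi : R -> R | measurable_fun setT psi]].

End Pursuit.

(* Put the relative position r(t) = (xO, yO - yT) of the observer on the
   circle of radius Rd at time t2, r(t2) = Rd u with u = (sin lam, cos lam).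
   Over [t2, t] the displacement is d = (A, B - tau), where tau = t - t2 and
   (A, B) = int alpha (cos psi, sin psi).  Its component along u is
   int alpha sin (lam + psi) - tau cos lam >= (- alpha - cos lam) tau >= 0
   because cos lam <= - alpha on the given bearings, and d <> 0 because
   B <= alpha tau < tau.  Hence |r(t)|^2 = Rd^2 + 2 Rd u.d + |d|^2 > Rd^2
   for every t > t2 and every control: the target is lost at once. *)
From HB Require Import structures.
From mathcomp Require Import all_boot all_order all_algebra.
From mathcomp Require Import all_classical all_reals all_analysis.
From mathcomp Require Import measurable_realfun lra ring.
Set Implicit Arguments. Unset Strict Implicit. Unset Printing Implicit Defensive.
Import Order.TTheory GRing.Theory Num.Theory.
Import numFieldNormedType.Exports.
Local Open Scope classical_set_scope.
Local Open Scope ring_scope.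

Section Loss_of_contact.
Variable R : realType.
Local Notation mu := (@lebesgue_measure R).

Lemma cos_le_of_acos_le (a x : R) :
  -1 <= a <= 1 -> acos a <= x <= pi -> cos x <= a.
Proof.
move=> a1 /andP[ax xpi]; have a0 := acos_ge0 a1.
rewrite -(acosK (a1 : a \in `[-1, 1])) leNgt ltr_cos -?leNgt //.
  by rewrite in_itv /= (le_trans a0 ax).
by rewrite in_itv /= a0 acos_lepi.
Qed.

Lemma cos_le_on_far_bearings (alpha lam : R) : 0 < alpha < 1 ->
  (acos (- alpha) <= lam <= pi \/ - pi <= lam <= - acos (- alpha)) ->
  cos lam <= - alpha.
Proof.
move=> /andP[a0 a1] hlam; have ha : -1 <= - alpha <= 1 by apply/andP; lra.
case: hlam => [|/andP[l1 l2]]; first exact: cos_le_of_acos_le.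
by rewrite -cosN; apply: cos_le_of_acos_le => //; apply/andP; lra.
Qed.

Lemma outward_displacement_leaves_disk (Rd s c dx dy : R) :
  0 < Rd -> s ^+ 2 + c ^+ 2 = 1 -> 0 <= s * dx + c * dy ->
  0 < dx ^+ 2 + dy ^+ 2 -> Rd ^+ 2 < (Rd * s + dx) ^+ 2 + (Rd * c + dy) ^+ 2.
Proof.
move=> Rd0 sc1 out d0.
have -> : (Rd * s + dx) ^+ 2 + (Rd * c + dy) ^+ 2 =
  Rd ^+ 2 * (s ^+ 2 + c ^+ 2) + 2 * Rd * (s * dx + c * dy) + (dx ^+ 2 + dy ^+ 2).
  by ring.
rewrite sc1 mulr1 -addrA ltrDl; apply: ltr_wpDl d0.
by apply: mulr_ge0 out; rewrite mulr_ge0 // ltW.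
Qed.

Lemma lebesgue_measure_itvcc (a b : R) : a <= b -> mu `[a, b] = (b - a)%:E.
Proof.
move=> ab; rewrite lebesgue_measure_itv /=.
case: ifPn => [_|]; first by rewrite -EFinD.
rewrite lte_fin -leNgt => ba; have -> : b = a by apply/eqP; rewrite eq_le ba ab.
by rewrite subrr.
Qed.

Section Heading_integrals.
Variables (a b : R) (psi : R -> R).
Hypotheses (ab : a <= b) (mpsi : measurable_fun setT psi).

Lemma integrable_itv_bounded (f : R -> R) (M : R) :
  measurable_fun setT f -> (forall x, `|f x| <= M) ->
  mu.-integrable `[a, b] (EFin \o f).
Proof.
move=> mf fM; apply: measurable_bounded_integrable => //.
- by have /= -> := lebesgue_measure_itvcc ab; rewrite ltry.
- exact: measurable_funS mf.
- exists M; split; first exact: num_real.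
  by move=> N MN x _ /=; rewrite (le_trans (fM x)) // ltW.
Qed.

Lemma integrable_itv_cst (c : R) : mu.-integrable `[a, b] (EFin \o (fun=> c)).
Proof. by apply: (@integrable_itv_bounded _ `|c|) => // x; rewrite ler_norm. Qed.

Lemma integrable_heading (c : R) (h : R -> R) :
  continuous h -> (forall x, `|h x| <= 1) ->
  mu.-integrable `[a, b] (EFin \o (fun s => c * h (psi s))).
Proof.
move=> ch h1; apply: (@integrable_itv_bounded _ `|c|).
  apply: measurableT_comp.
    by apply: continuous_measurable_fun; exact: mulrl_continuous.
  exact: measurableT_comp (continuous_measurable_fun ch) mpsi.
by move=> x; rewrite normrM -[leRHS]mulr1 ler_wpM2l.
Qed.

Lemma integrable_heading_cos (c : R) :
  mu.-integrable `[a, b] (EFin \o (fun s => c * cos (psi s))).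
Proof.
apply: integrable_heading => [|x]; first exact: continuous_cos.
by rewrite ler_norml cos_geN1 cos_le1.
Qed.

Lemma integrable_heading_sin (c : R) :
  mu.-integrable `[a, b] (EFin \o (fun s => c * sin (psi s))).
Proof.
apply: integrable_heading => [|x]; first exact: continuous_sin.
by rewrite ler_norml sin_geN1 sin_le1.
Qed.

Lemma Rintegral_itv_cst (c : R) : \int[mu]_(x in `[a, b]) c = c * (b - a).
Proof. by rewrite Rintegral_cst //; have /= -> := lebesgue_measure_itvcc ab. Qed.

Lemma Rintegral_heading_sin_le (alpha : R) : 0 <= alpha ->
  \int[mu]_(s in `[a, b]) (alpha * sin (psi s)) <= alpha * (b - a).
Proof.
move=> a0; rewrite -Rintegral_itv_cst; apply: le_Rintegral => //.
- exact: integrable_heading_sin.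
- exact: integrable_itv_cst.
- by move=> x _; rewrite -[leRHS]mulr1 ler_wpM2l // sin_le1.
Qed.

Lemma Rintegral_heading_proj_ge (alpha theta : R) : 0 <= alpha ->
  - alpha * (b - a) <=
  sin theta * \int[mu]_(s in `[a, b]) (alpha * cos (psi s)) +
  cos theta * \int[mu]_(s in `[a, b]) (alpha * sin (psi s)).
Proof.
move=> a0.
have iC := integrable_heading_cos alpha; have iS := integrable_heading_sin alpha.
have iCs : mu.-integrable `[a, b]
    (EFin \o (fun s => sin theta * (alpha * cos (psi s)))).
  by have := integrable_heading_cos (sin theta * alpha);
    apply: eq_integrable => // x _ /=; rewrite mulrA.
have iSc : mu.-integrable `[a, b]
    (EFin \o (fun s => cos theta * (alpha * sin (psi s)))).
  by have := integrable_heading_sin (cos theta * alpha);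
    apply: eq_integrable => // x _ /=; rewrite mulrA.
rewrite -!RintegralZl // -RintegralD // -Rintegral_itv_cst.
apply: le_Rintegral => //.
- exact: integrable_itv_cst.
- by have := @integrableD _ _ _ mu `[a, b] ltac:(by []) _ _ iCs iSc;
    apply: eq_integrable.
- move=> x _; have := sin_geN1 (theta + psi x); rewrite sinD; nra.
Qed.

End Heading_integrals.

Lemma leaves_disk_after_contact (alpha Rd lam t2 y2 : R) (psi : R -> R) (t : R) :
  0 <= alpha < 1 -> 0 < Rd -> cos lam <= - alpha -> measurable_fun setT psi ->
  t2 < t ->
  Rd ^+ 2 < xO alpha Rd lam t2 psi t ^+ 2 +
            (yO alpha Rd lam t2 y2 psi t - yT t2 y2 t) ^+ 2.
Proof.
move=> /andP[a0 a1] Rd0 hc mpsi tt; have t2t := ltW tt.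
have hB := Rintegral_heading_sin_le t2t mpsi a0.
have hproj := Rintegral_heading_proj_ge t2t mpsi lam a0.
rewrite /xO /yO /yT.
set A := \int[mu]_(s in _) (alpha * cos (psi s)) in hproj *.
set B := \int[mu]_(s in _) (alpha * sin (psi s)) in hB hproj *.
have -> : y2 + Rd * cos lam + B - (y2 + (t - t2)) = Rd * cos lam + (B - (t - t2)).
  by ring.
apply: outward_displacement_leaves_disk => //.
- by rewrite addrC cos2Dsin2.
- have far : 0 <= (- alpha - cos lam) * (t - t2) by apply: mulr_ge0; lra.
  nra.
- have behind : B - (t - t2) < 0 by nra.
  nra.
Qed.

Lemma ereal_inf_halfline (a : R) (S : set R) :
  (forall t, a < t -> S t) -> (forall t, S t -> a <= t) ->
  ereal_inf [set t%:E | t in S] = a%:E.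
Proof.
move=> gtS Sge; apply/eqP; rewrite eq_le; apply/andP; split.
  apply/lee_addgt0Pr => e e0; apply: ge_ereal_inf.
  by exists (a + e)%:E => //; exists (a + e) => //; apply: gtS; rewrite ltrDl.
by apply: le_ereal_inf_tmp => _ [t St <-]; rewrite lee_fin Sge.
Qed.

Lemma exit_time_contact (alpha Rd lam t2 y2 : R) (psi : R -> R) :
  0 <= alpha < 1 -> 0 < Rd -> cos lam <= - alpha -> measurable_fun setT psi ->
  exit_time alpha Rd lam t2 y2 psi = t2%:E.
Proof.
move=> ha Rd0 hc mpsi; apply: ereal_inf_halfline => [t tt|t []//].
by split; [exact: ltW|exact: leaves_disk_after_contact].
Qed.

End Loss_of_contact.

Theorem lemma4 (R : realType) (alpha Rd lam t2 y2 : R) :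
  0 < alpha < 1 -> 0 < Rd -> -pi <= lam <= pi ->
  (acos (- alpha) <= lam <= pi \/ - pi <= lam <= - acos (- alpha)) ->
  Vobs alpha Rd lam t2 y2 = 0%E.
Proof.
move=> ha Rd0 _ hlam.
have hc := cos_le_on_far_bearings ha hlam.
have {}ha : 0 <= alpha < 1 by case/andP: ha => a0 ->; rewrite ltW.
have obs0 psi : measurable_fun setT psi ->
    (exit_time alpha Rd lam t2 y2 psi - t2%:E)%E = 0%E.
  by move=> mpsi; rewrite exit_time_contact // -EFinB subrr.
rewrite /Vobs -[RHS]ereal_sup1; congr ereal_sup; apply/seteqP; split.
  by move=> _ [psi mpsi <-]; exact: obs0.
move=> _ ->; exists (fun=> 0) => /=; first exact: measurable_cst.
exact: obs0.
Qed.
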